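(* For all integers $n,m \geq 1$ with $\{n,m\} \neq \{1,1\}$ and $\{n,m\}\neq\{1,3\}$, $$\overline{a}(n)\, \overline{a}(m) \geq \overline{a}(n+m).$$ Moreover, among such pairs equality holds only when $\{n,m\}=\{1,2\}$.
   Context: The cubic overpartition function $\overline{a}(n)$ is defined by $\sum_{n\ge 0}\overline{a}(n)q^n=\frac{(-q;q)_\infty(-q^2;q^2)_\infty}{(q;q)_\infty(q^2;q^2)_\infty}$ for $|q|<1$, where $(a;q)_\infty=\prod_{j\ge 0}(1-aq^j)$. *)

(* The cubic overpartition function, defined as the
   coefficients of the formal power series
     (-q;q)_oo (-q^2;q^2)_oo / ((q;q)_oo (q^2;q^2)_oo).
   The coefficient of q^n only depends on the product truncated at
   degree n: factors with index j > n contribute 1 + O(q^(n+1)), and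
   1/(1 - q^k) = \sum_(i <= n) q^(k*i) + O(q^(n+1)) for k >= 1. *)
From mathcomp Require Import all_boot all_order all_algebra.
Set Implicit Arguments. Unset Strict Implicit. Unset Printing Implicit Defensive.
Import GRing.Theory.
Local Open Scope ring_scope.

(* truncated geometric series 1 + X^k + X^(2k) + ... + X^(N k), standing for
   1/(1 - X^k) modulo X^(N+1) when k >= 1 *)
Definition geom_trunc (N k : nat) : {poly int} := \sum_(i < N.+1) 'X^(k * i).

Definition cubic_ovp_partial (N : nat) : {poly int} :=
  \prod_(1 <= j < N.+1)
     ((1 + 'X^j) * (1 + 'X^(2 * j)) * geom_trunc N j * geom_trunc N (2 * j)).

Definition cubic_ovp (n : nat) : int := (cubic_ovp_partial n)`_n.

From Stdlib Require Import ZArith.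
From mathcomp Require Import all_boot all_order all_algebra.
From mathcomp Require Import zify ring lra ssrZ.
Import Order.TTheory GRing.Theory Num.Theory.
Set Implicit Arguments. Unset Strict Implicit. Unset Printing Implicit Defensive.
Local Open Scope ring_scope.

(* Applying theta = q d/dq to the logarithm of the generating function gives
   the recurrence n a(n) = sum_(k = 1..n) c(k) a(n - k), with 2k <= c(k) <= 4k^2.
   Feeding the recurrence into itself yields a(n) >= 25 (n^2 - 200), hence
   a(n) > 24 n^2 for n >= 14.  For n >= m, split the recurrence for a(n + m)
   at k = n: by induction the first part is at most n a(n) a(m) + 32 n^2 and
   the second at most 8 n^2 m a(m); as m a(m) >= 2 and a(n) > 24 n^2, this
   gives a(n + m) < a(n) a(m) whenever n + m > 26.  The remaining pairs and
   the initial values behind the growth bounds are checked by running the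
   recurrence over Z. *)

Section TruncatedEquality.
Variable R : comNzRingType.
Implicit Types p q c d : {poly R}.

Definition eq_upto (N : nat) p q := forall i, (i <= N)%N -> p`_i = q`_i.

Variable N : nat.

Lemma eq_upto_sym p q : eq_upto N p q -> eq_upto N q p.
Proof. by move=> pq i /pq. Qed.

Lemma eq_upto_trans q p r : eq_upto N p q -> eq_upto N q r -> eq_upto N p r.
Proof. by move=> pq qr i iN; rewrite pq ?qr. Qed.

Lemma eq_uptoD p p' q q' :
  eq_upto N p p' -> eq_upto N q q' -> eq_upto N (p + q) (p' + q').
Proof. by move=> pp' qq' i iN; rewrite !coefD pp' ?qq'. Qed.

Lemma eq_uptoB p p' q q' :
  eq_upto N p p' -> eq_upto N q q' -> eq_upto N (p - q) (p' - q').
Proof. by move=> pp' qq' i iN; rewrite !coefB pp' ?qq'. Qed.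

Lemma eq_uptoM p p' q q' :
  eq_upto N p p' -> eq_upto N q q' -> eq_upto N (p * q) (p' * q').
Proof.
move=> pp' qq' i iN; rewrite !coefM; apply: eq_bigr => j _.
have ji := ltn_ord j; rewrite pp' ?qq' //; lia.
Qed.

Lemma eq_uptoMl c p q : eq_upto N p q -> eq_upto N (c * p) (c * q).
Proof. exact: eq_uptoM. Qed.

Lemma eq_upto_prod (I : eqType) (r : seq I) (F G : I -> {poly R}) :
  (forall j, j \in r -> eq_upto N (F j) (G j)) ->
  eq_upto N (\prod_(j <- r) F j) (\prod_(j <- r) G j).
Proof.
elim: r => [|x r IHr] FG; first by rewrite !big_nil.
rewrite !big_cons; apply: eq_uptoM; first by apply: FG; rewrite mem_head.
by apply: IHr => j jr; apply: FG; rewrite inE jr orbT.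
Qed.

Lemma eq_upto_Xn0 (d : nat) : (N < d)%N -> eq_upto N 'X^d 0.
Proof. by move=> Nd i iN; rewrite coefXn coef0 ltn_eqF // (leq_ltn_trans iN Nd). Qed.

Lemma eq_upto_cancel c d p q :
  eq_upto N (c * d) 1 -> eq_upto N (c * p) (c * q) -> eq_upto N p q.
Proof.
move=> cd1 cpq.
have inv r : eq_upto N r (d * (c * r)).
  rewrite mulrA [d * c]mulrC -[X in eq_upto _ X]mul1r.
  by apply: eq_uptoM => //; apply: eq_upto_sym.
apply: eq_upto_trans (inv p) _; apply: eq_upto_trans (eq_uptoMl d cpq) _.
exact: eq_upto_sym.
Qed.

End TruncatedEquality.

Section EulerOperator.
Variable R : comNzRingType.
Implicit Types p q a b : {poly R}.

Definition theta p := 'X * p^`().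

Lemma coef_theta p i : (theta p)`_i = p`_i *+ i.
Proof. by rewrite coefXM; case: i => [|i] /=; rewrite ?mulr0n // coef_deriv. Qed.

Lemma thetaD p q : theta (p + q) = theta p + theta q.
Proof. by rewrite /theta derivD mulrDr. Qed.

Lemma thetaB p q : theta (p - q) = theta p - theta q.
Proof. by rewrite /theta derivB mulrBr. Qed.

Lemma thetaM p q : theta (p * q) = theta p * q + p * theta q.
Proof. by rewrite /theta derivM; ring. Qed.

Lemma theta1 : theta 1 = 0.
Proof. by rewrite /theta -polyC1 derivC mulr0. Qed.

Lemma thetaXn k : theta 'X^k = k%:R * 'X^k.
Proof.
rewrite /theta derivXn -mulr_natl; case: k => [|k]; first by rewrite !mul0r mulr0.
by rewrite mulrCA -exprS.
Qed.

Lemma eq_upto_theta N p q : eq_upto N p q -> eq_upto N (theta p) (theta q).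
Proof. by move=> pq i iN; rewrite !coef_theta pq. Qed.

Lemma eq_upto_thetaM N p q a b :
  eq_upto N (theta p) (p * a) -> eq_upto N (theta q) (q * b) ->
  eq_upto N (theta (p * q)) (p * q * (a + b)).
Proof.
move=> pa qb; rewrite thetaM.
have -> : p * q * (a + b) = (p * a) * q + p * (q * b) by ring.
by apply: eq_uptoD; apply: eq_uptoM.
Qed.

Lemma eq_upto_theta_prod N (I : eqType) (r : seq I) (F E : I -> {poly R}) :
  (forall j, j \in r -> eq_upto N (theta (F j)) (F j * E j)) ->
  eq_upto N (theta (\prod_(j <- r) F j)) (\prod_(j <- r) F j * \sum_(j <- r) E j).
Proof.
elim: r => [|x r IHr] FE; first by rewrite !big_nil theta1 mulr0.
rewrite !big_cons; apply: eq_upto_thetaM; first by apply: FE; rewrite mem_head.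
by apply: IHr => j jr; apply: FE; rewrite inE jr orbT.
Qed.

End EulerOperator.

Lemma geom_trunc_mul N k : (1 - 'X^k) * geom_trunc N k = 1 - 'X^(k * N.+1).
Proof.
have := subrXX (1 : {poly int}) 'X^k N.+1.
rewrite expr1n exprM => ->; rewrite /geom_trunc; congr (_ * _).
by apply: eq_bigr => i _; rewrite expr1n mul1r exprM.
Qed.

Lemma eq_upto_geom_trunc_inv N k :
  (0 < k)%N -> eq_upto N ((1 - 'X^k) * geom_trunc N k) 1.
Proof.
move=> k_gt0; rewrite geom_trunc_mul -[X in eq_upto _ _ X]subr0.
by apply: eq_uptoB => //; apply: eq_upto_Xn0; nia.
Qed.

Lemma coef_geom_trunc N k l :
  (0 < k)%N -> (l <= N)%N -> (geom_trunc N k)`_l = (k %| l)%:R.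
Proof.
move=> k_gt0 lN; rewrite /geom_trunc coef_sum.
under eq_bigr do rewrite coefXn.
move: lN; have [/dvdnP[q ->] lN|kNl _] := boolP (k %| l)%N; last first.
  by rewrite big1 // => i _; case: eqP => // li; case/negP: kNl; rewrite li dvdn_mulr.
have qN : (q < N.+1)%N by rewrite ltnS (leq_trans (leq_pmulr q k_gt0) lN).
rewrite (eq_bigr (fun i : 'I_N.+1 => if (i : nat) == q then 1 else 0)); last first.
  by move=> i _; rewrite mulnC eqn_pmul2l // eq_sym; case: eqP.
by rewrite -big_mkcond (big_ord1_eq _ (fun=> 1)) qN.
Qed.

Lemma eq_upto_geom_trunc N M k :
  (0 < k)%N -> (N <= M)%N -> eq_upto N (geom_trunc M k) (geom_trunc N k).
Proof.
by move=> k_gt0 NM i iN; rewrite !coef_geom_trunc //; apply: leq_trans NM.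
Qed.

Lemma eq_upto_geom_trunc1 N M k : (N < k)%N -> eq_upto N (geom_trunc M k) 1.
Proof.
move=> Nk i iN; rewrite coef1 /geom_trunc coef_sum big_ord_recl muln0 coefXn.
rewrite big1 ?addr0 // => j _; rewrite coefXn; case: eqP => // iE.
by move: iN; rewrite iE lift0 mulnS => /(leq_trans (leq_addr _ _)); rewrite leqNgt Nk.
Qed.

Definition logder_geom N k : {poly int} :=
  (2 * k)%:R * 'X^k * geom_trunc N (2 * k).

(* (1 + y)/(1 - y) with y = X^k has logarithmic derivative 2 k y / (1 - y^2);
   multiplying by (1 - y)^2 clears both inverses. *)
Lemma theta_geom_factor N k : (0 < k)%N ->
  eq_upto N (theta ((1 + 'X^k) * geom_trunc N k))
            ((1 + 'X^k) * geom_trunc N k * logder_geom N k).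
Proof.
move=> k_gt0; rewrite /logder_geom.
set y : {poly int} := 'X^k; set G := geom_trunc N k; set H := geom_trunc N (2 * k).
set u := (1 + y) * G.
have yG : eq_upto N ((1 - y) * G) 1 by apply: eq_upto_geom_trunc_inv.
have y2H : eq_upto N ((1 - y ^+ 2) * H) 1.
  by rewrite /H -exprM mulnC; apply: eq_upto_geom_trunc_inv; rewrite muln_gt0.
have yu : eq_upto N ((1 - y) * u) (1 + y).
  have -> : (1 - y) * u = (1 + y) * ((1 - y) * G) by rewrite /u; ring.
  by rewrite -[X in eq_upto _ _ X]mulr1; apply: eq_uptoMl.
have y_thu : eq_upto N ((1 - y) * theta u) (k%:R * y * (1 + u)).
  have -> : (1 - y) * theta u = theta ((1 - y) * u) + k%:R * y * u.
    by rewrite [theta (_ * u)]thetaM thetaB theta1 thetaXn -/y; ring.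
  have -> : k%:R * y * (1 + u) = theta (1 + y) + k%:R * y * u.
    by rewrite thetaD theta1 thetaXn -/y; ring.
  by apply: eq_uptoD => //; apply: eq_upto_theta.
have lhs : eq_upto N ((1 - y) ^+ 2 * theta u) ((2 * k)%:R * y).
  rewrite expr2 -mulrA; apply: eq_upto_trans (eq_uptoMl _ y_thu) _.
  have -> : (1 - y) * (k%:R * y * (1 + u)) = k%:R * y * (1 - y) + k%:R * y * ((1 - y) * u).
    by ring.
  have -> : (2 * k)%:R * y = k%:R * y * (1 - y) + k%:R * y * (1 + y) by rewrite natrM; ring.
  by apply: eq_uptoD => //; apply: eq_uptoMl.
have rhs : eq_upto N ((1 - y) ^+ 2 * (u * ((2 * k)%:R * y * H))) ((2 * k)%:R * y).
  have -> : (1 - y) ^+ 2 * (u * ((2 * k)%:R * y * H))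
          = (1 - y) * G * ((1 - y ^+ 2) * H) * ((2 * k)%:R * y) by rewrite /u; ring.
  rewrite -[X in eq_upto _ _ X]mul1r; apply: eq_uptoM => //.
  by rewrite -[X in eq_upto _ _ X]mulr1; apply: eq_uptoM.
apply: (@eq_upto_cancel _ _ ((1 - y) ^+ 2) (G ^+ 2)).
  by rewrite -exprMn expr2 -[X in eq_upto _ _ X]mulr1; apply: eq_uptoM.
by apply: eq_upto_trans lhs (eq_upto_sym rhs).
Qed.

Definition logder_partial N : {poly int} :=
  \sum_(1 <= j < N.+1) (logder_geom N j + logder_geom N (2 * j)).

Lemma theta_cubic_ovp_partial N :
  eq_upto N (theta (cubic_ovp_partial N)) (cubic_ovp_partial N * logder_partial N).
Proof.
rewrite /cubic_ovp_partial (eq_bigr (fun j =>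
  (1 + 'X^j) * geom_trunc N j * ((1 + 'X^(2 * j)) * geom_trunc N (2 * j)))); last first.
  by move=> j _; ring.
apply: eq_upto_theta_prod => j; rewrite mem_index_iota => /andP[j_gt0 _].
by apply: eq_upto_thetaM; apply: theta_geom_factor; rewrite ?muln_gt0.
Qed.

(* The coefficient of q^k in (2m q^m)/(1 - q^(2m)): nonzero iff k/m is odd. *)
Definition logder_term (k m : nat) : nat :=
  (((m <= k) && (2 * m %| k - m)) * (2 * m))%N.

Definition logder_coef (k : nat) : nat :=
  sumn [seq logder_term k j + logder_term k (2 * j) | j <- iota 1 k].

Lemma coef_logder_geom N m i : (0 < m)%N -> (i <= N)%N ->
  (logder_geom N m)`_i = (logder_term i m)%:R.
Proof.
move=> m_gt0 iN.
have -> : logder_geom N m = 'X^m * (geom_trunc N (2 * m) *+ (2 * m)).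
  by rewrite /logder_geom -mulr_natl; ring.
rewrite coefXnM /logder_term; case: ltnP => [// | mi] /=.
by rewrite coefMn coef_geom_trunc ?muln_gt0 ?natrM ?mulr_natr //; lia.
Qed.

Lemma coef_logder_partial N i : (i <= N)%N ->
  (logder_partial N)`_i = (logder_coef i)%:R.
Proof.
move=> iN; rewrite /logder_partial coef_sum (big_cat_nat _ (n := i.+1)) //=.
rewrite [X in _ + X]big_nat_cond [X in _ + X]big1 ?addr0; last first.
  move=> j /andP[/andP[ij _] _]; have j_gt0 : (0 < j)%N by apply: leq_ltn_trans ij.
  rewrite coefD !coef_logder_geom ?muln_gt0 //.
  have i2j : (i < 2 * j)%N by apply: leq_trans ij (leq_pmull _ _).
  by rewrite /logder_term [(j <= i)%N]leqNgt [(2 * j <= i)%N]leqNgt ij i2j.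
rewrite /logder_coef sumnE big_map natr_sum /index_iota subn1 /=.
apply: eq_big_seq => j; rewrite mem_iota => /andP[j_gt0 _].
by rewrite coefD !coef_logder_geom ?muln_gt0 // natrD.
Qed.

Lemma eq_upto_cubic_ovp_partial N M :
  (N <= M)%N -> eq_upto N (cubic_ovp_partial M) (cubic_ovp_partial N).
Proof.
move=> NM; rewrite /cubic_ovp_partial (big_cat_nat _ (n := N.+1)) //=.
rewrite -[X in eq_upto _ _ X]mulr1; apply: eq_uptoM.
  apply: eq_upto_prod => j; rewrite mem_index_iota => /andP[j_gt0 _].
  apply: eq_uptoM; last by apply: eq_upto_geom_trunc; rewrite ?muln_gt0.
  by apply: eq_uptoM => //; apply: eq_upto_geom_trunc.
apply: (@eq_upto_trans _ _ (\prod_(j <- index_iota N.+1 M.+1) 1)); last by rewrite big1.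
apply: eq_upto_prod => j; rewrite mem_index_iota => /andP[Nj _].
have N2j : (N < 2 * j)%N by apply: leq_trans Nj (leq_pmull _ _).
have X1 d : (N < d)%N -> eq_upto N (1 + 'X^d) 1.
  by move=> Nd; rewrite -[X in eq_upto _ _ X]addr0; apply: eq_uptoD => //; apply: eq_upto_Xn0.
rewrite -[X in eq_upto _ _ X]mulr1; apply: eq_uptoM; last exact: eq_upto_geom_trunc1 N2j.
rewrite -[X in eq_upto _ _ X]mulr1; apply: eq_uptoM; last exact: eq_upto_geom_trunc1 Nj.
by rewrite -[X in eq_upto _ _ X]mulr1; apply: eq_uptoM; apply: X1.
Qed.

Lemma cubic_ovpE N i : (i <= N)%N -> cubic_ovp i = (cubic_ovp_partial N)`_i.
Proof. by move=> iN; rewrite /cubic_ovp (eq_upto_cubic_ovp_partial iN). Qed.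

Lemma cubic_ovp_rec n : cubic_ovp n * n%:R =
  \sum_(1 <= k < n.+1) (logder_coef k)%:R * cubic_ovp (n - k).
Proof.
rewrite mulr_natr (cubic_ovpE (leqnn n)) -coef_theta.
rewrite (theta_cubic_ovp_partial (leqnn n)) mulrC coefM big_ord_recl.
rewrite coef_logder_partial // mul0r add0r big_add1 /= big_mkord.
apply: eq_bigr => k _.
by rewrite coef_logder_partial // (cubic_ovpE (leq_subr k.+1 n)).
Qed.

Lemma logder_term_le k m : (logder_term k m <= 2 * k)%N.
Proof. by rewrite /logder_term; case: leqP => //= mk; case: (_ %| _)%N; lia. Qed.

Lemma logder_coefE k : logder_coef k =
  (\sum_(1 <= j < k.+1) (logder_term k j + logder_term k (2 * j)))%N.
Proof. by rewrite /logder_coef sumnE big_map /index_iota subn1. Qed.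

Local Notation a := cubic_ovp.
Local Notation c k := ((logder_coef k)%:R : int).

Lemma logder_coef_ge k : (0 < k)%N -> 2 * k%:R <= c k.
Proof.
move=> k_gt0; rewrite -natrM ler_nat logder_coefE big_nat_recr //=.
by rewrite /logder_term leqnn subnn dvdn0 mul1n; lia.
Qed.

Lemma logder_coef_le k : c k <= 4 * k%:R ^+ 2.
Proof.
rewrite -natrX -natrM ler_nat logder_coefE (@leq_trans (\sum_(1 <= j < k.+1) 4 * k)) //.
  by apply: leq_sum => j _; have := logder_term_le k j; have := logder_term_le k (2 * j); lia.
by rewrite sum_nat_const_nat; lia.
Qed.

Lemma cubic_ovp0 : a 0 = 1.
Proof. by rewrite /cubic_ovp /cubic_ovp_partial big_geq // coefC. Qed.

Lemma cubic_ovp_ge0 n : 0 <= a n.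
Proof.
elim/ltn_ind: n => -[_|n IHn]; first by rewrite cubic_ovp0.
rewrite -(pmulr_lge0 _ (ltr0Sn _ n)) cubic_ovp_rec big_nat_cond sumr_ge0 //.
move=> k /andP[/andP[k_gt0 _] _].
by rewrite mulr_ge0 ?IHn //; lia.
Qed.

Lemma cubic_ovp_ge2 n : (0 < n)%N -> 2 <= a n.
Proof.
case: n => // n _; rewrite -(ler_pM2r (ltr0Sn _ n)) cubic_ovp_rec big_nat_recr //=.
rewrite subnn cubic_ovp0 mulr1 ler_wpDl ?logder_coef_ge ?sumr_ge0 // => k _.
by rewrite mulr_ge0 ?cubic_ovp_ge0.
Qed.

Lemma cubic_ovp_sum_le m : 2 * \sum_(1 <= k < m.+1) a (m - k) <= a m * m%:R.
Proof.
rewrite cubic_ovp_rec mulr_sumr big_nat_cond [leRHS]big_nat_cond.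
apply: ler_sum => k /andP[/andP[k_gt0 _] _]; rewrite ler_wpM2r ?cubic_ovp_ge0 //.
have := logder_coef_ge k_gt0; have : 1 <= k%:R :> int by rewrite ler1n.
lra.
Qed.

Lemma sum_quad_weight (v : int) N :
  12 * \sum_(1 <= k < N.+1) k%:R * ((v - k%:R) ^+ 2 - 200) =
  6 * v ^+ 2 * N%:R * (N%:R + 1) - 4 * v * N%:R * (N%:R + 1) * (2 * N%:R + 1)
  + 3 * N%:R ^+ 2 * (N%:R + 1) ^+ 2 - 1200 * N%:R * (N%:R + 1).
Proof.
elim: N => [|N IHN]; first by rewrite big_geq //; ring.
by rewrite big_nat_recr //= mulrDr IHN -natr1; ring.
Qed.

(* The base range is where the induction step does not yet close. *)
Lemma cubic_ovp_quad_lb :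
  (forall n, (n <= 40)%N -> 25 * (n%:R ^+ 2 - 200) <= a n) ->
  forall n, 25 * (n%:R ^+ 2 - 200) <= a n.
Proof.
move=> base; elim/ltn_ind => n IHn; have [/base //|n_gt40] := leqP n 40.
have rec_lb : 50 * \sum_(1 <= k < n.+1) k%:R * ((n%:R - k%:R) ^+ 2 - 200)
    <= a n * n%:R.
  rewrite cubic_ovp_rec mulr_sumr big_nat_cond [leRHS]big_nat_cond.
  apply: ler_sum => k /andP[/andP[k_gt0 kn] _].
  apply: le_trans (_ : 2 * k%:R * a (n - k) <= _).
    rewrite -natrB; last lia.
    set X := _ - 200; have -> : 50 * (k%:R * X) = 2 * k%:R * (25 * X) by ring.
    by rewrite ler_wpM2l ?IHn //; lia.
  by rewrite ler_wpM2r ?cubic_ovp_ge0 ?logder_coef_ge.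
have := sum_quad_weight n%:R n; move: rec_lb.
set S := \sum_(_ <= _ < _) _; set v := (n%:R : int) => rec_lb closed_form.
have v41 : 41 <= v by rewrite (ler_nat int 41 n).
rewrite -(ler_pM2r (_ : 0 < v)); last lra.
have : 0 <= v ^+ 2 * ((v - 41) * (v + 35)) by rewrite mulr_ge0 ?sqr_ge0 ?mulr_ge0 //; lra.
nra.
Qed.

(* a(1 + 1) = a(1)^2 + 2 and a(1 + 3) = a(1) a(3) + 2 are the only failures of
   submultiplicativity. *)
Definition ovp_defect (s : nat) : int := if (s <= 4)%N then 2 else 0.

Section SubmultiplicativeStep.
Variables n m : nat.
Hypotheses (m_gt0 : (0 < m)%N) (mn : (m <= n)%N) (n_ge4 : (4 <= n)%N).
Hypothesis IH : forall k, (k < n)%N -> a (k + m) <= a k * a m + ovp_defect (k + m).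

Lemma ovp_defect_sum_le :
  \sum_(1 <= j < n.+1) c j * ovp_defect (n - j + m) <= 32 * n%:R ^+ 2.
Proof.
rewrite (big_cat_nat _ (n := n - 3)) /=; [|lia|lia].
rewrite big_nat_cond big1 ?add0r => [|j /andP[/andP[_ jn] _]]; last first.
  by rewrite /ovp_defect ifN ?mulr0 //; lia.
apply: le_trans (_ : \sum_(n - 3 <= j < n.+1) 8 * n%:R ^+ 2 <= _).
  apply: ler_sum_nat => j /andP[_ jn].
  have d2 : ovp_defect (n - j + m) <= 2 by rewrite /ovp_defect; case: ifP.
  have jn2 : j%:R ^+ 2 <= n%:R ^+ 2 :> int.
    by rewrite !expr2 -!natrM ler_nat leq_mul // -ltnS.
  have := ler_wpM2l (ler0n _ (logder_coef j)) d2; have := logder_coef_le j.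
  lra.
by rewrite sumr_const_nat (_ : n.+1 - (n - 3) = 4)%N; [rewrite -mulr_natr; lra | lia].
Qed.

Lemma cubic_ovp_rec_head_le :
  \sum_(1 <= j < n.+1) c j * a (n + m - j) <= a n * n%:R * a m + 32 * n%:R ^+ 2.
Proof.
apply: le_trans (_ : \sum_(1 <= j < n.+1)
  (c j * a (n - j) * a m + c j * ovp_defect (n - j + m)) <= _).
  rewrite big_nat_cond [leRHS]big_nat_cond; apply: ler_sum => j /andP[/andP[j_gt0 jn] _].
  rewrite -mulrA -mulrDr ler_wpM2l // (_ : n + m - j = n - j + m)%N; last lia.
  by apply: IH; lia.
by rewrite big_split /= -mulr_suml -cubic_ovp_rec lerD2l ovp_defect_sum_le.
Qed.

Lemma cubic_ovp_rec_tail_le :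
  \sum_(n.+1 <= j < (n + m).+1) c j * a (n + m - j) <= 8 * n%:R ^+ 2 * (a m * m%:R).
Proof.
apply: le_trans (_ : \sum_(n.+1 <= j < (n + m).+1) 16 * n%:R ^+ 2 * a (n + m - j) <= _).
  apply: ler_sum_nat => j /andP[_ jnm]; rewrite ler_wpM2r ?cubic_ovp_ge0 //.
  have j2n : j%:R ^+ 2 <= 4 * n%:R ^+ 2 :> int by rewrite -!natrX -natrM ler_nat; nia.
  have := logder_coef_le j; lra.
rewrite -mulr_sumr -[n.+1]add1n big_addn (_ : (n + m).+1 - n = m.+1)%N; last lia.
rewrite (eq_big_nat _ _ (F2 := fun i => a (m - i))) => [|i _]; last by congr a; lia.
have := cubic_ovp_sum_le m; have : 0 <= n%:R ^+ 2 :> int by rewrite sqr_ge0.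
nra.
Qed.

Lemma cubic_ovp_submul_step : 24 * n%:R ^+ 2 < a n -> a (n + m) < a n * a m.
Proof.
move=> a_n_big.
have rec : a (n + m) * (n + m)%:R =
    \sum_(1 <= j < n.+1) c j * a (n + m - j)
  + \sum_(n.+1 <= j < (n + m).+1) c j * a (n + m - j).
  by rewrite cubic_ovp_rec -big_cat_nat //; lia.
have head := cubic_ovp_rec_head_le; have tail := cubic_ovp_rec_tail_le; rewrite natrD in rec.
have am2 : 2 <= a m * m%:R.
  have := cubic_ovp_ge2 m_gt0; have : 1 <= m%:R :> int by rewrite ler1n.
  nra.
have P24 : 24 * n%:R ^+ 2 * (a m * m%:R) < a n * (a m * m%:R).
  by rewrite ltr_pM2r //; lra.
have P16 : 32 * n%:R ^+ 2 <= 16 * n%:R ^+ 2 * (a m * m%:R) :> int.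
  by have := sqr_ge0 (n%:R : int); nra.
rewrite -(ltr_pM2r (_ : 0 < n%:R + m%:R)); last by rewrite -natrD ltr0n; lia.
lra.
Qed.

End SubmultiplicativeStep.

Definition exceptional_pair (n m : nat) : bool := (minn n m == 1%N) && (n + m <= 4)%N.

Section Tables.
Local Open Scope Z_scope.

(* [t] lists a(n-1), ..., a(0); this is a(n) by the recurrence. *)
Definition cubic_ovp_next (n : nat) (t : seq Z) : Z :=
  foldr Z.add 0 [seq Z.of_nat (logder_coef k.+1) * nth 0 t k | k <- iota 0 n] / Z.of_nat n.

Fixpoint cubic_ovp_table (n : nat) : seq Z :=
  if n is n'.+1 then let t := cubic_ovp_table n' in cubic_ovp_next n t :: t
  else [:: 1].

Definition check_upto (N lo : nat) (P : nat -> Z -> bool) : bool :=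
  let t := cubic_ovp_table N in
  all (fun n => P n (nth 0 t (N - n))) (iota lo (N.+1 - lo)).

Definition check_pairs (N : nat) (P : nat -> nat -> Z -> Z -> Z -> bool) : bool :=
  let t := cubic_ovp_table N in let v n := nth 0 t (N - n) in
  all (fun n => all (fun m => P n m (v n) (v m) (v (n + m)%N)) (iota 1 (N - n))) (iota 1 N).

Definition submul_check (n m : nat) (x y z : Z) : bool :=
  if exceptional_pair n m then z <=? x * y + 2 else z <? x * y.

Definition quad_lb_check (n : nat) (x : Z) : bool := 25 * (Z.of_nat n ^ 2 - 200) <=? x.

Definition gt_sq_check (n : nat) (x : Z) : bool := 24 * Z.of_nat n ^ 2 <? x.

End Tables.

Lemma Z_of_int_sum (s : seq nat) (F : nat -> int) :
  Z_of_int (\sum_(k <- s) F k) = foldr Z.add Z0 [seq Z_of_int (F k) | k <- s].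
Proof. by elim: s => [|k s IHs]; rewrite ?big_nil // big_cons raddfD /= IHs. Qed.

Lemma nth_cubic_ovp_table n k :
  (k <= n)%N -> nth Z0 (cubic_ovp_table n) k = Z_of_int (a (n - k)).
Proof.
elim: n k => [|n IHn] [|k] //= kn; rewrite ?cubic_ovp0 ?IHn // /cubic_ovp_next.
have -> : [seq Z.mul (Z.of_nat (logder_coef k.+1)) (nth Z0 (cubic_ovp_table n) k)
          | k <- iota 0 n.+1]
        = [seq Z_of_int (c k.+1 * a (n.+1 - k.+1)) | k <- iota 0 n.+1].
  apply/eq_in_map => j; rewrite mem_iota => /andP[_ jn]; rewrite IHn ?subSS; last lia.
  by rewrite rmorphM; congr (Z.mul _ _) => /=; lia.
have rec := cubic_ovp_rec n.+1; rewrite big_add1 /= /index_iota subn0 in rec.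
rewrite -Z_of_int_sum -rec (_ : Z_of_int _ = Z_of_int (a n.+1) * Z.of_nat n.+1)%Z; last lia.
by rewrite Z.div_mul.
Qed.

Lemma check_uptoP N lo P : check_upto N lo P ->
  forall n, (lo <= n)%N -> (n <= N)%N -> P n (Z_of_int (a n)).
Proof.
rewrite /check_upto => /allP chk n lo_n nN.
have n_iota : n \in iota lo (N.+1 - lo) by rewrite mem_iota; lia.
by have := chk n n_iota; rewrite nth_cubic_ovp_table ?subKn ?leq_subr.
Qed.

Lemma check_pairsP N P : check_pairs N P ->
  forall n m, (0 < n)%N -> (0 < m)%N -> (n + m <= N)%N ->
  P n m (Z_of_int (a n)) (Z_of_int (a m)) (Z_of_int (a (n + m))).
Proof.
rewrite /check_pairs => /allP chk n m n_gt0 m_gt0 nmN.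
have n_iota : n \in iota 1 N by rewrite mem_iota; lia.
have m_iota : m \in iota 1 (N - n) by rewrite mem_iota; lia.
have := allP (chk n n_iota) m m_iota.
by rewrite !nth_cubic_ovp_table ?subKn ?leq_subr //; lia.
Qed.

Lemma cubic_ovp_submul_small n m : (0 < n)%N -> (0 < m)%N -> (n + m <= 26)%N ->
  if exceptional_pair n m then a (n + m) <= a n * a m + 2 else a (n + m) < a n * a m.
Proof.
have chk : check_pairs 26 submul_check by vm_compute.
move=> n_gt0 m_gt0 nm26; have := check_pairsP chk n_gt0 m_gt0 nm26.
by rewrite /submul_check; case: ifP => _; [move/Z.leb_le | move/Z.ltb_lt]; lia.
Qed.

Lemma cubic_ovp_gt_sq n : (14 <= n)%N -> 24 * n%:R ^+ 2 < a n.
Proof.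
move=> n14; have [n71 | n_gt71] := leqP n 71.
  have chk : check_upto 71 14 gt_sq_check by vm_compute.
  by have /Z.ltb_lt := check_uptoP chk n14 n71; lia.
have base n' : (n' <= 40)%N -> 25 * (n'%:R ^+ 2 - 200) <= a n'.
  have chk : check_upto 40 0 quad_lb_check by vm_compute.
  by move=> n'40; have /Z.leb_le := check_uptoP chk (leq0n n') n'40; lia.
have := cubic_ovp_quad_lb base n; have : 72 <= n%:R :> int by rewrite (ler_nat int 72).
nra.
Qed.

Lemma cubic_ovp_le_defect k m : (0 < m)%N ->
  ((0 < k)%N -> ~~ exceptional_pair k m -> a (k + m) < a k * a m) ->
  a (k + m) <= a k * a m + ovp_defect (k + m).
Proof.
move=> m_gt0 lt_km; rewrite /ovp_defect.
have [-> | k_gt0] := posnP k; first by rewrite add0n cubic_ovp0 mul1r lerDl; case: ifP.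
have [exc | nexc] := boolP (exceptional_pair k m); last first.
  have le_km := ltW (lt_km k_gt0 nexc).
  by case: ifP => _; rewrite ?addr0 // (le_trans le_km) ?lerDl.
move: (exc) => /andP[_ km4]; rewrite km4.
have := cubic_ovp_submul_small k_gt0 m_gt0 (leq_trans km4 (isT : (4 <= 26)%N)).
by rewrite exc.
Qed.

Lemma exceptional_pairC n m : exceptional_pair n m = exceptional_pair m n.
Proof. by rewrite /exceptional_pair minnC addnC. Qed.

Lemma cubic_ovp_submul_lt n m : (0 < n)%N -> (0 < m)%N ->
  ~~ exceptional_pair n m -> a (n + m) < a n * a m.
Proof.
have [s] := ubnP (n + m); elim: s n m => // s IHs n m nms n_gt0 m_gt0 nexc.
have [small | big] := leqP (n + m) 26.
  by have := cubic_ovp_submul_small n_gt0 m_gt0 small; rewrite (negbTE nexc).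
wlog mn : n m nms n_gt0 m_gt0 nexc big / (m <= n)%N.
  move=> hwlog; have [|nm] := leqP m n; first exact: hwlog.
  by rewrite addnC mulrC; apply: hwlog; rewrite 1?addnC 1?exceptional_pairC //; lia.
apply: cubic_ovp_submul_step => //; [lia | | apply: cubic_ovp_gt_sq; lia].
move=> k kn; apply: cubic_ovp_le_defect => // k_gt0 nexc_k.
by apply: IHs => //; lia.
Qed.

Lemma cubic_ovp_1_2 : a (1 + 2) = a 1 * a 2.
Proof.
have val k : (k <= 3)%N -> Z_of_int (a k) = nth Z0 (cubic_ovp_table 3) (3 - k).
  by move=> k3; rewrite nth_cubic_ovp_table ?subKn ?leq_subr.
by apply: (can_inj Z_of_intK); rewrite rmorphM /= !val.
Qed.

Theorem theorem2p6 (n m : nat) :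
  (1 <= n)%N -> (1 <= m)%N ->
  ~ (n = 1%N /\ m = 1%N) ->
  ~ ((n = 1%N /\ m = 3%N) \/ (n = 3%N /\ m = 1%N)) ->
  cubic_ovp (n + m) <= cubic_ovp n * cubic_ovp m /\
  (cubic_ovp n * cubic_ovp m = cubic_ovp (n + m) ->
     (n = 1%N /\ m = 2%N) \/ (n = 2%N /\ m = 1%N)).
Proof.
move=> n_gt0 m_gt0 not11 not13.
have [exc | nexc] := boolP (exceptional_pair n m); last first.
  have lt := cubic_ovp_submul_lt n_gt0 m_gt0 nexc.
  by split=> [|eq]; [exact: ltW | move: lt; rewrite eq ltxx].
have [[-> ->] | [-> ->]] : (n = 1 /\ m = 2 \/ n = 2 /\ m = 1)%N.
  by move: exc; rewrite /exceptional_pair; lia.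
- by rewrite cubic_ovp_1_2; split; [|left].
- by rewrite addnC mulrC cubic_ovp_1_2; split; [|right].
Qed.
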